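(* Let $H$ and $G$ be Abelian groups that are isotyped (with respect to the variety of Abelian groups), and suppose one of them is free and finitely generated. Then $H$ and $G$ are isomorphic.
   Context: Let $\Theta$ be the variety of Abelian groups. $X^0=\{x_1,x_2,\dots\}$ is an infinite set of variables; for finite $X\subset X^0$, $W(X)$ is the free $\Theta$-algebra on $X$; homomorphisms $W(X)\to H$ are points. For each finite $X$, the set $\Phi(X)$ of formulas of sort $X$ is defined inductively: equalities $w\equiv w'$ ($w,w'\in W(X)$) are in $\Phi(X)$; $\Phi(X)$ is closed under $\neg,\vee,\wedge$ and $\exists x$ for $x\in X$; and for each homomorphism $s:W(X)\to W(Y)$ and $u\in\Phi(X)$, $s_*u\in\Phi(Y)$. Values $Val^X_H(u)\subseteq\mathrm{Hom}(W(X),H)$: $Val^X_H(w\equiv w')=\{\mu:\mu(w)=\mu(w')\}$; $\mu\in Val^X_H(\exists x\,u)$ iff some point $\nu$ agreeing with $\mu$ on $X\setminus\{x\}$ lies in $Val^X_H(u)$; $\vee,\wedge,\neg$ are union, intersection, complement; $\mu\in Val^Y_H(s_*u)$ iff $\mu\circ s\in Val^X_H(u)$. The logical kernel of $\mu:W(X)\to H$ is $LKer(\mu)=\{u\in\Phi(X):\mu\in Val^X_H(u)\}$; a set $T\subseteq\Phi(X)$ is an $X$-type of $H$ if $T=LKer(\mu)$ for some point $\mu:W(X)\to H$. Algebras $H_1,H_2\in\Theta$ are isotyped if for every finite $X\subset X^0$, every $X$-type of $H_1$ is an $X$-type of $H_2$ and vice versa. *)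

From HB Require Import structures.
From mathcomp Require Import all_boot all_order all_algebra.
From mathcomp Require Import finmap.
Set Implicit Arguments. Unset Strict Implicit. Unset Printing Implicit Defensive.
Import Order.TTheory GRing.Theory Num.Theory.
Local Open Scope ring_scope.
Local Open Scope fset_scope.

(* Variables X^0 = nat; a finite set of variables is X : {fset nat}. *)

(* W(X): the free abelian group on X, realised as Z^X (finitely supported
   since X is finite). *)
Definition W (X : {fset nat}) : zmodType := {ffun X -> int}.

Definition gen (X : {fset nat}) (x : X) : W X := [ffun z => ((z == x) : nat)%:Z].

Inductive formula : {fset nat} -> Type :=
| Feq  (X : {fset nat}) (w w' : W X) : formula X
| Fneg (X : {fset nat}) : formula X -> formula X
| For  (X : {fset nat}) : formula X -> formula X -> formula X
| Fand (X : {fset nat}) : formula X -> formula X -> formula X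
| Fex  (X : {fset nat}) (x : X) : formula X -> formula X
| Fsub (X Y : {fset nat}) (s : {additive W X -> W Y}) : formula X -> formula Y.

(* mu \in Val^X_H(u); mu is meant to be a point (homomorphism W(X) -> H). *)
Fixpoint holds (H : zmodType) (X : {fset nat}) (u : formula X) : (W X -> H) -> Prop :=
  match u in formula X0 return (W X0 -> H) -> Prop with
  | Feq _ w w' => fun mu => mu w = mu w'
  | Fneg _ u1 => fun mu => ~ holds u1 mu
  | For _ u1 u2 => fun mu => holds u1 mu \/ holds u2 mu
  | Fand _ u1 u2 => fun mu => holds u1 mu /\ holds u2 mu
  | Fex X0 x u1 => fun mu =>
      exists nu : {additive W X0 -> H},
        (forall y : X0, y != x -> nu (gen y) = mu (gen y)) /\ holds u1 nu
  | Fsub _ _ s u1 => fun mu => holds u1 (mu \o s)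
  end.

Definition LKer (H : zmodType) (X : {fset nat}) (mu : {additive W X -> H})
  : formula X -> Prop := fun u => holds u mu.

Definition is_type (H : zmodType) (X : {fset nat}) (T : formula X -> Prop) : Prop :=
  exists mu : {additive W X -> H}, forall u, T u <-> LKer mu u.

Definition isotyped (H1 H2 : zmodType) : Prop :=
  forall X : {fset nat},
    (forall T, is_type H1 T -> @is_type H2 X T) /\
    (forall T, is_type H2 T -> @is_type H1 X T).

Definition free_fg (H : zmodType) : Prop :=
  exists (n : nat) (e : 'I_n -> H),
    forall h : H, exists! c : {ffun 'I_n -> int}, h = \sum_(i < n) e i *~ c i.

Definition isomorphic (H G : zmodType) : Prop :=
  exists f : {additive H -> G}, bijective f.

From HB Require Import structures.
From mathcomp Require Import all_boot all_algebra finmap.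
Set Implicit Arguments. Unset Strict Implicit. Unset Printing Implicit Defensive.
Import GRing.Theory.
Local Open Scope ring_scope.
Local Open Scope fset_scope.

(* Let e_1, ..., e_n be a basis of H and let mu send the variables x_i to e_i and a
   fresh variable y to 0.  A point nu of G with the type of mu gives the additive map
   f : e_i |-> nu x_i, which is injective because mu and nu have the same kernel.
   Given g in G, let Q agree with nu on the x_i and send y to g, and let A be a point
   of H with the type of Q.  Then phi : h |-> A (word of h) is an injective
   endomorphism of H = Z^n, so d H lies in its image for d = det phi <> 0; say
   d (A y) = phi k.  The formula "exists y, word k = d y" holds at A, hence at Q, at
   nu and at mu, so k = d k'; as H is torsion free, A y = phi k', and this equation
   transfers back to Q as g = f k'. *)

Section Points.
Variables (X : {fset nat}) (K : zmodType).

Definition point (v : X -> K) (w : W X) : K := \sum_(z : X) v z *~ w z.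

Lemma point_is_zmod_morphism v : zmod_morphism (point v).
Proof. by move=> a b; rewrite /point -sumrB; apply: eq_bigr => z _; rewrite !ffunE mulrzBr. Qed.

HB.instance Definition _ v :=
  GRing.isZmodMorphism.Build (W X) K (point v) (point_is_zmod_morphism v).

Lemma point_gen v z : point v (gen z) = v z.
Proof.
rewrite /point (bigD1 z) //= big1 => [|z' z'z]; rewrite ffunE.
  by rewrite eqxx addr0.
by rewrite (negbTE z'z).
Qed.

Lemma W_expand (w : W X) : w = \sum_(z : X) gen z *~ w z.
Proof.
apply/ffunP => z; rewrite sum_ffunE (bigD1 z) //= big1 => [|z' z'z].
  by rewrite ffunMzE ffunE eqxx addr0 /= mulrzz mul1r.
by rewrite ffunMzE ffunE eq_sym (negbTE z'z) mul0rz.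
Qed.

Lemma raddf_point (f : {additive W X -> K}) : f =1 point (fun z => f (gen z)).
Proof. by move=> w; rewrite {1}(W_expand w) raddf_sum; apply: eq_bigr => z _; rewrite raddfMz. Qed.

Lemma raddf_eq_off (f g : {additive W X -> K}) (x : X) (w : W X) :
  (forall z, z != x -> f (gen z) = g (gen z)) -> w x = 0 -> f w = g w.
Proof.
move=> fg wx; rewrite (raddf_point f) (raddf_point g); apply: eq_bigr => z _.
by case: (eqVneq z x) => [->|/fg ->]; rewrite ?wx ?mulr0z.
Qed.

Lemma holds_divisible (mu : {additive W X -> K}) (x : X) (w : W X) (d : int) :
  w x = 0 -> holds (Fex x (Feq w (gen x *~ d))) mu <-> exists t, mu w = t *~ d.
Proof.
move=> wx; split => [[mu' [mu'_mu]]|[t mu_w]] /=.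
  by rewrite raddfMz (raddf_eq_off mu'_mu wx) => ->; exists (mu' (gen x)).
pose mu' : {additive W X -> K} := point (fun z => if z == x then t else mu (gen z)).
have mu'_mu z : z != x -> mu' (gen z) = mu (gen z) by rewrite /mu' /= point_gen => /negbTE ->.
exists mu'; split => //=.
by rewrite (raddf_eq_off mu'_mu wx) mu_w raddfMz /mu' /= point_gen eqxx.
Qed.

End Points.

Definition same_type (K L : zmodType) (X : {fset nat}) (mu : W X -> K) (nu : W X -> L) :=
  forall u : formula X, holds u mu <-> holds u nu.

Section SameType.
Variables (K L : zmodType) (X : {fset nat}).
Implicit Types (mu : {additive W X -> K}) (nu : {additive W X -> L}).

Lemma same_type_eq mu nu w w' : same_type mu nu -> mu w = mu w' <-> nu w = nu w'.
Proof. by move=> /(_ (Feq w w')). Qed.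

Lemma same_type_kernel mu nu w : same_type mu nu -> mu w = 0 <-> nu w = 0.
Proof. by rewrite -(raddf0 mu) -(raddf0 nu); apply: same_type_eq. Qed.

Lemma same_type_divisible mu nu (x : X) (w : W X) (d : int) :
  same_type mu nu -> w x = 0 ->
  (exists t, mu w = t *~ d) <-> (exists t, nu w = t *~ d).
Proof.
move=> mu_nu wx.
by rewrite -(holds_divisible mu d wx) -(holds_divisible nu d wx).
Qed.

End SameType.

Lemma isotyped_sym (H G : zmodType) : isotyped H G -> isotyped G H.
Proof. by move=> iso X; have [HG GH] := iso X. Qed.

Lemma isotyped_same_type (H G : zmodType) (X : {fset nat}) (mu : {additive W X -> H}) :
  isotyped H G -> exists nu : {additive W X -> G}, same_type mu nu.
Proof. by move=> /(_ X) [/(_ (LKer mu)) [|nu]]; [exists mu|exists nu]. Qed.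

Lemma isomorphic_sym (H G : zmodType) : isomorphic H G -> isomorphic G H.
Proof.
case=> f [f' fK f'K].
pose g : {additive G -> H} :=
  HB.pack f' (GRing.isZmodMorphism.Build G H f' (can2_zmod_morphism fK f'K)).
by exists g; exists f.
Qed.

Lemma inj_surj_bijective (T : choiceType) (U : eqType) (f : T -> U) :
  injective f -> (forall u, exists t, f t = u) -> bijective f.
Proof.
move=> f_inj f_surj; have ex u : exists t, f t == u by have [t <-] := f_surj u; exists t.
exists (fun u => xchoose (ex u)) => [t|u]; last exact/eqP/(xchooseP (ex u)).
by apply: f_inj; apply/eqP/(xchooseP (ex (f t))).
Qed.

Section Combinations.
Variables (K : zmodType) (n : nat).

Definition comb (e : 'I_n -> K) (c : 'rV[int]_n) : K := \sum_(i < n) e i *~ c 0 i.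

Lemma comb_is_zmod_morphism e : zmod_morphism (comb e).
Proof. by move=> a b; rewrite /comb -sumrB; apply: eq_bigr => i _; rewrite !mxE mulrzBr. Qed.

HB.instance Definition _ e :=
  GRing.isZmodMorphism.Build 'rV[int]_n K (comb e) (comb_is_zmod_morphism e).

Lemma combZ e a c : comb e (a *: c) = comb e c *~ a.
Proof. by rewrite -raddfMz -scaler_int intz. Qed.

End Combinations.

Lemma raddf_comb (K L : zmodType) (f : {additive K -> L}) n (e : 'I_n -> K) c :
  f (comb e c) = comb (f \o e) c.
Proof. by rewrite raddf_sum; apply: eq_bigr => i _; rewrite raddfMz. Qed.

Section FreeBasis.
Variables (H : zmodType) (n : nat) (e : 'I_n -> H).
Hypothesis basis :
  forall h : H, exists! c : {ffun 'I_n -> int}, h = \sum_(i < n) e i *~ c i.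

Lemma comb_inj : injective (comb e).
Proof.
move=> c c' cc'; have [c0 [_ c0_uniq]] := basis (comb e c).
have row_c0 b : comb e c = comb e b -> c0 = [ffun i => b 0 i].
  by move=> cb; apply: c0_uniq; rewrite cb; apply: eq_bigr => i _; rewrite ffunE.
apply/rowP => i.
by have /ffunP/(_ i) := etrans (esym (row_c0 c erefl)) (row_c0 c' cc'); rewrite !ffunE.
Qed.

Lemma coord_exists h : exists c, h == comb e c.
Proof.
have [c [ce _]] := basis h; exists (\row_i c i).
by rewrite ce; apply/eqP/eq_bigr => i _; rewrite mxE.
Qed.

Definition coord h : 'rV[int]_n := xchoose (coord_exists h).

Lemma coordK : cancel coord (comb e).
Proof. by move=> h; rewrite -(eqP (xchooseP (coord_exists h))). Qed.

Lemma combK : cancel (comb e) coord.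
Proof. by move=> c; apply: comb_inj; rewrite coordK. Qed.

HB.instance Definition _ :=
  GRing.isZmodMorphism.Build H 'rV[int]_n coord (can2_zmod_morphism combK coordK).

Lemma basis_mulrz_eq0 (h : H) (d : int) : d != 0 -> h *~ d = 0 -> h = 0.
Proof.
move=> d0 hd0; have /eqP : d *: coord h = 0.
  by apply: comb_inj; rewrite combZ coordK hd0 !raddf0.
by rewrite scalemx_eq0 (negbTE d0) => /eqP coord0; rewrite -[h]coordK coord0 raddf0.
Qed.

Lemma injective_endo_finite_index (phi : {additive H -> H}) :
  injective phi -> exists2 d : int, d != 0 & forall h, exists k, phi k = h *~ d.
Proof.
move=> phi_inj; pose M := \matrix_(i, j) coord (phi (e i)) 0 j.
have phi_comb c : phi (comb e c) = comb e (c *m M).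
  rewrite raddf_comb mulmx_sum_row raddf_sum; apply: eq_bigr => i _.
  rewrite /= combZ; congr (_ *~ _); rewrite -[LHS]coordK; congr (comb e _).
  by apply/rowP => j; rewrite !mxE.
have detM : \det M != 0.
  apply/negP => /det0P [v /negP v0 vM]; apply: v0; apply/eqP/comb_inj/phi_inj.
  by rewrite phi_comb vM !raddf0.
exists (\det M) => // h; exists (comb e (coord h *m \adj M)).
by rewrite phi_comb -mulmxA mul_adj_mx mul_mx_scalar combZ coordK.
Qed.

Variable G : zmodType.
Hypothesis iso : isotyped H G.

Definition vars : {fset nat} := seq_fset tt (iota 0 n.+1).

Lemma mem_vars (i : 'I_n.+1) : val i \in vars.
Proof. by rewrite seq_fsetE mem_iota /= ltn_ord. Qed.

Definition var_of_ord (i : 'I_n.+1) : vars := [` mem_vars i].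
Definition basis_var (i : 'I_n) : vars := var_of_ord (widen_ord (leqnSn n) i).
Definition fresh_var : vars := var_of_ord ord_max.

Lemma basis_var_neq_fresh i : basis_var i != fresh_var.
Proof. by apply/negP => /eqP/(congr1 val) /= i_eq_n; move: (ltn_ord i); rewrite i_eq_n ltnn. Qed.

Definition coord_word : {additive H -> W vars} := comb (@gen vars \o basis_var) \o coord.

Lemma coord_word_fresh h : coord_word h fresh_var = 0.
Proof.
rewrite /= /comb sum_ffunE big1 // => i _.
by rewrite ffunMzE ffunE eq_sym (negbTE (basis_var_neq_fresh i)) mul0rz.
Qed.

Definition basis_point : {additive W vars -> H} :=
  point (fun z => if insub (val z) is Some i then e i else 0).

Lemma basis_point_coord_word h : basis_point (coord_word h) = h.
Proof.
rewrite /= raddf_comb -[RHS]coordK; apply: eq_bigr => i _.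
by rewrite /= point_gen /= valK.
Qed.

Lemma same_type_basis_point_surjective (nu : {additive W vars -> G}) :
  same_type basis_point nu -> forall g, exists k, nu (coord_word k) = g.
Proof.
move=> type_nu g.
pose Q : {additive W vars -> G} := point (fun z => if z == fresh_var then g else nu (gen z)).
have Qy : Q (gen fresh_var) = g by rewrite /= point_gen eqxx.
have Q_nu k : Q (coord_word k) = nu (coord_word k).
  by apply: (raddf_eq_off _ (coord_word_fresh k)) => z /negbTE zy; rewrite /= point_gen zy.
have [A A_Q] := isotyped_same_type Q (isotyped_sym iso).
have A_inj : injective (A \o coord_word).
  apply: raddf_inj => h /= /(same_type_kernel _ A_Q).
  by rewrite Q_nu => /(same_type_kernel _ type_nu); rewrite basis_point_coord_word.
have [d d0 dA] := injective_endo_finite_index A_inj.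
have [k Ak] := dA (A (gen fresh_var)).
have [k' kk'] : exists k', k = k' *~ d.
  have : exists t, A (coord_word k) = t *~ d by exists (A (gen fresh_var)).
  move/(same_type_divisible d A_Q (coord_word_fresh k)); rewrite Q_nu.
  by move/(same_type_divisible d type_nu (coord_word_fresh k)); rewrite basis_point_coord_word.
have Ay : A (gen fresh_var) = A (coord_word k').
  apply/eqP; rewrite -subr_eq0; apply/eqP; apply: (basis_mulrz_eq0 d0).
  by rewrite mulrzBl -Ak kk' (raddfMz (A \o coord_word)) subrr.
by exists k'; rewrite -Q_nu -Qy; apply/(same_type_eq _ _ A_Q).
Qed.

Lemma free_isotyped_isomorphic : isomorphic H G.
Proof.
have [nu type_nu] := isotyped_same_type basis_point iso.
exists (nu \o coord_word); apply: inj_surj_bijective.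
  apply: raddf_inj => h /= /(same_type_kernel _ type_nu).
  by rewrite basis_point_coord_word.
exact: same_type_basis_point_surjective.
Qed.

End FreeBasis.

Theorem mainTheorem8 (H G : zmodType) :
  isotyped H G -> free_fg H \/ free_fg G -> isomorphic H G.
Proof.
move=> iso [[n [e basis]] | [n [e basis]]].
  exact: (free_isotyped_isomorphic basis iso).
exact/isomorphic_sym/(free_isotyped_isomorphic basis)/isotyped_sym.
Qed.
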